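(* An $L$-layer linear attention model with $H$ heads, dimension $d$ and precision $p$ cannot solve the function evaluation task $\mathsf{Eva}$ on $[n]$ whenever $LHd(d+1)p<n\log n$. On the other hand, a single-layer full attention Transformer solves $\mathsf{Eva}$ with $Hdp=O(\mathrm{poly}\log n)$. The same lower bound holds for linear attention with chain-of-thought.
   Context: Function evaluation $\mathsf{Eva}(f,x)$: the input is a function $f:[n]\to[n]$, given as $n$ tokens encoding $f(1),\dots,f(n)$, followed by one token encoding $x\in[n]$. The required output is $f(x)$. Linear attention layer: head $h$ outputs $y_i=\sum_{j\le i}\alpha_{i,j}Vx_j$ with $\alpha_{i,j}=\varphi(Qx_i)^\top\varphi(Kx_j)/\sum_{j'\le i}\varphi(Qx_i)^\top\varphi(Kx_{j'})$ for an arbitrary $\varphi:\mathbb{R}^d\to\mathbb{R}^d$. Here $Q,K,V\in\mathbb{R}^{d\times dH}$ have $p$-bit entries, the $H$ head outputs are concatenated, and each layer is followed by an arbitrary position-wise MLP map. Full attention is defined in the same way, with softmax weights $\alpha_{i,j}\propto\exp(\langle Qx_i,Kx_j\rangle)$. All quantities use $p$-bit precision. With chain-of-thought (CoT), the model, after reading the input, autoregressively generates additional tokens (each generated token is appended as a new input position), and the answer is read from the generated tokens. *)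

From HB Require Import structures.
From mathcomp Require Import all_boot all_order all_algebra.
From mathcomp Require Import reals sequences exp.
From Stdlib Require List.
Notation In := List.In.
Set Implicit Arguments.
Unset Strict Implicit.
Unset Printing Implicit Defensive.
Import Order.TTheory GRing.Theory Num.Theory.
Local Open Scope ring_scope.

Section Transformers.
Variable R : realType.

Record precision (p : nat) := Precision {
  pvals : seq R;
  pvals_uniq : uniq pvals;
  pvals_size : (size pvals <= 2 ^ p)%N;
  rnd : R -> R;
  rnd_in : forall x, rnd x \in pvals }.

(* The standard p-bit fixed-point format: integers z in
   [-(2^p %/ 2), 2^p - 2^p %/ 2) (exactly 2^p of them), scaled by 2^-(p./2);
   rounding = round to nearest, saturating at the ends of the range. *)
Definition fx_lo (p : nat) : int := - (Posz (2 ^ p %/ 2)).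
Definition fx_hi (p : nat) : int := Posz (2 ^ p - 2 ^ p %/ 2) - 1.
Definition fx_scale (p : nat) : R := 2%:R ^+ (p./2).

Definition is_fx (p : nat) (r : R) : Prop :=
  exists z : int, fx_lo p <= z <= fx_hi p /\ r = z%:~R / fx_scale p.

Definition fx_rnd (p : nat) (x : R) : R :=
  let z := Num.floor (x * fx_scale p + 2%:R^-1) in
  (Num.max (fx_lo p) (Num.min (fx_hi p) z))%:~R / fx_scale p.

Definition rndv (rd : R -> R) (m k : nat) (A : 'M[R]_(m, k)) : 'M[R]_(m, k) :=
  map_mx rd A.

(* [n] = {1,..,n} is represented by 'I_n.  The input has n+1 positions:
   positions 0..n-1 carry tokens f(1),...,f(n), position n carries x.
   emb (position) (token) is the (arbitrary, p-bit rounded) embedding. *)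
Definition eva_input (rd : R -> R) (n d : nat) (emb : nat -> 'I_n -> 'rV[R]_d)
    (f : 'I_n -> 'I_n) (x : 'I_n) : seq 'rV[R]_d :=
  [seq rndv rd (emb (val i) (f i)) | i <- enum 'I_n] ++ [:: rndv rd (emb n x)].

Record lin_head (d : nat) := LinHead {
  lQ : 'M[R]_d; lK : 'M[R]_d; lV : 'M[R]_d;
  lphi : 'rV[R]_d -> 'rV[R]_d }.

(* H heads (the d x dH matrices Q,K,V are given blockwise per head),
   followed by an arbitrary position-wise MLP which sees the position's
   input (residual stream) and the H head outputs. *)
Record lin_layer (d H : nat) := LinLayer {
  lheads : 'I_H -> lin_head d;
  lmlp : 'rV[R]_d -> ('I_H -> 'rV[R]_d) -> 'rV[R]_d }.

Definition lin_layer_wf (inP : R -> Prop) d H (l : lin_layer d H) : Prop :=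
  forall h i j, inP (lQ (lheads l h) i j) /\ inP (lK (lheads l h) i j)
                /\ inP (lV (lheads l h) i j).

(* Recurrent state of one head after positions 1..i:
   S_i = sum_{j<=i} phi(K x_j)^T (V x_j)   (d x d)
   z_i = sum_{j<=i} phi(K x_j)            (1 x d)
   accumulated in p-bit precision (rounded after every step). *)
Definition lin_state (d : nat) := ('M[R]_d * 'rV[R]_d)%type.

Definition lin_update (rd : R -> R) d (hd : lin_head d) (st : lin_state d)
    (x : 'rV[R]_d) : lin_state d :=
  let k := rndv rd (lphi hd (rndv rd (x *m lK hd))) in
  let v := rndv rd (x *m lV hd) in
  (rndv rd (st.1 + k^T *m v), rndv rd (st.2 + k)).

(* y_i = sum_{j<=i} alpha_{ij} V x_j
       = (phi(Q x_i) S_i) / (phi(Q x_i) . z_i) *)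
Definition lin_out (rd : R -> R) d (hd : lin_head d) (st : lin_state d)
    (x : 'rV[R]_d) : 'rV[R]_d :=
  let q := rndv rd (lphi hd (rndv rd (x *m lQ hd))) in
  let num := rndv rd (q *m st.1) in
  let den := rd (\sum_(k < d) q 0 k * st.2 0 k) in
  rndv rd (den^-1 *: num).

Fixpoint lin_layer_run (rd : R -> R) d H (l : lin_layer d H)
    (st : 'I_H -> lin_state d) (xs : seq 'rV[R]_d) : seq 'rV[R]_d :=
  match xs with
  | [::] => [::]
  | x :: xs' =>
      let st' := fun h => lin_update rd (lheads l h) (st h) x in
      rndv rd (lmlp l x (fun h => lin_out rd (lheads l h) (st' h) x))
        :: lin_layer_run rd l st' xs'
  end.

Definition lin_layer_apply (rd : R -> R) d H (l : lin_layer d H)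
    (xs : seq 'rV[R]_d) : seq 'rV[R]_d :=
  lin_layer_run rd l (fun _ => (0, 0)) xs.

Definition lin_run (rd : R -> R) d H (ls : seq (lin_layer d H))
    (xs : seq 'rV[R]_d) : seq 'rV[R]_d :=
  foldl (fun ys l => lin_layer_apply rd l ys) xs ls.

Definition lin_solves_Eva (p : nat) (P : precision p) (n L H d : nat) : Prop :=
  exists (ls : seq (lin_layer d H)) (emb : nat -> 'I_n -> 'rV[R]_d)
         (dec : 'rV[R]_d -> 'I_n),
    size ls = L /\
    (forall l, In l ls -> lin_layer_wf (fun r => r \in pvals P) l) /\
    forall (f : 'I_n -> 'I_n) (x : 'I_n),
      dec (last 0 (lin_run (rnd P) ls (eva_input (rnd P) emb f x))) = f x.

Fixpoint cot_generate (rd : R -> R) d H (ls : seq (lin_layer d H))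
    (V : Type) (emb_gen : nat -> V -> 'rV[R]_d) (dec : 'rV[R]_d -> V)
    (T : nat) (xs : seq 'rV[R]_d) : seq V :=
  match T with
  | 0 => [::]
  | T'.+1 =>
      let v := dec (last 0 (lin_run rd ls xs)) in
      v :: cot_generate rd ls emb_gen dec T'
             (rcons xs (rndv rd (emb_gen (size xs) v)))
  end.

Definition lin_cot_solves_Eva (p : nat) (P : precision p) (n L H d : nat)
    : Prop :=
  exists (V : finType) (T : nat) (ls : seq (lin_layer d H))
         (emb : nat -> 'I_n -> 'rV[R]_d) (emb_gen : nat -> V -> 'rV[R]_d)
         (dec : 'rV[R]_d -> V) (ans : seq V -> 'I_n),
    size ls = L /\
    (forall l, In l ls -> lin_layer_wf (fun r => r \in pvals P) l) /\
    forall (f : 'I_n -> 'I_n) (x : 'I_n),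
      ans (cot_generate (rnd P) ls emb_gen dec T
             (eva_input (rnd P) emb f x)) = f x.

Record full_head (d : nat) := FullHead { fQ : 'M[R]_d; fK : 'M[R]_d; fV : 'M[R]_d }.

Record full_layer (d H : nat) := FullLayer {
  fheads : 'I_H -> full_head d;
  fmlp : 'rV[R]_d -> ('I_H -> 'rV[R]_d) -> 'rV[R]_d }.

Definition full_layer_wf (inP : R -> Prop) d H (l : full_layer d H) : Prop :=
  forall h i j, inP (fQ (fheads l h) i j) /\ inP (fK (fheads l h) i j)
                /\ inP (fV (fheads l h) i j).

(* output of a head at position i (0-based), causal:
   y_i = sum_{j<=i} alpha_{ij} V x_j,  alpha_{ij} ∝ exp(<Q x_i, K x_j>) *)
Definition full_out (rd : R -> R) d (hd : full_head d) (xs : seq 'rV[R]_d)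
    (i : nat) : 'rV[R]_d :=
  let q := rndv rd (nth 0 xs i *m fQ hd) in
  let k j := rndv rd (nth 0 xs j *m fK hd) in
  let v j := rndv rd (nth 0 xs j *m fV hd) in
  let w j := rd (expR (rd (\sum_(c < d) q 0 c * k j 0 c))) in
  let num := rndv rd (\sum_(j < i.+1) w j *: v j) in
  let den := rd (\sum_(j < i.+1) w j) in
  rndv rd (den^-1 *: num).

Definition full_layer_apply (rd : R -> R) d H (l : full_layer d H)
    (xs : seq 'rV[R]_d) : seq 'rV[R]_d :=
  [seq rndv rd (fmlp l (nth 0 xs i) (fun h => full_out rd (fheads l h) xs i))
   | i <- iota 0 (size xs)].

Definition full1_solves_Eva (n H d p : nat) : Prop :=
  exists (l : full_layer d H) (emb : nat -> 'I_n -> 'rV[R]_d)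
         (dec : 'rV[R]_d -> 'I_n),
    full_layer_wf (is_fx p) l /\
    forall (f : 'I_n -> 'I_n) (x : 'I_n),
      dec (last 0 (full_layer_apply (fx_rnd p) l
                     (eva_input (fx_rnd p) emb f x))) = f x.

End Transformers.

From mathcomp Require Import all_boot all_order all_algebra.
From mathcomp Require Import boolp reals sequences exp.
From mathcomp Require Import ring lra zify.
Import Order.TTheory GRing.Theory Num.Theory.
Local Open Scope ring_scope.
Set Implicit Arguments.
Unset Strict Implicit.
Unset Printing Implicit Defensive.

(* A linear attention layer is a recurrence: once the n tokens f(1), ..., f(n)
   have been read, each head of each layer is summarised by a d x d matrix and
   a d-vector of p-bit numbers, so the state of the whole model at that point
   takes at most 2^(LHd(d+1)p) values.  Everything computed afterwards -- the
   answer f(x), with or without chain of thought -- depends only on this state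
   and on x, so f is recoverable from the state and n^n <= 2^(LHd(d+1)p).

   For the upper bound, positions are embedded so that the attention score of
   the query x against position j is -C (x - j)^2.  With 2m-bit fixed-point
   numbers and C = m + 2, the rounded exponential of every score vanishes
   except at j = x, so the softmax is the exact indicator of position x and
   the head copies f(x). *)

Section LinearAttentionRecurrence.
Variables (R : realType) (d H : nat) (rd : R -> R).
Local Notation states := ('I_H -> lin_state R d).

Definition lin_states0 : states := fun _ => (0, 0).

Definition lin_layer_step (l : lin_layer R d H) (st : states) (x : 'rV[R]_d) : states :=
  fun h => lin_update rd (lheads l h) (st h) x.

Definition lin_layer_states (l : lin_layer R d H) (st : states) (xs : seq 'rV[R]_d) :=
  foldl (lin_layer_step l) st xs.

Lemma lin_layer_run_cat (l : lin_layer R d H) st xs ys :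
  lin_layer_run rd l st (xs ++ ys) =
  lin_layer_run rd l st xs ++ lin_layer_run rd l (lin_layer_states l st xs) ys.
Proof. by elim: xs st => [|x xs IH] st //=; rewrite IH. Qed.

Lemma size_lin_layer_run (l : lin_layer R d H) st xs : size (lin_layer_run rd l st xs) = size xs.
Proof. by elim: xs st => [|x xs IH] st //=; rewrite IH. Qed.

Fixpoint lin_prefix_states (ls : seq (lin_layer R d H)) xs : seq states :=
  if ls is l :: ls' then
    lin_layer_states l lin_states0 xs :: lin_prefix_states ls' (lin_layer_apply rd l xs)
  else [::].

Fixpoint lin_run_from (ls : seq (lin_layer R d H)) (sts : seq states) ys :=
  if ls is l :: ls' then
    lin_run_from ls' (behead sts) (lin_layer_run rd l (head lin_states0 sts) ys)
  else ys.

Lemma size_lin_prefix_states ls xs : size (lin_prefix_states ls xs) = size ls.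
Proof. by elim: ls xs => [|l ls IH] xs //=; rewrite IH. Qed.

Lemma size_lin_run_from ls sts ys : size (lin_run_from ls sts ys) = size ys.
Proof. by elim: ls sts ys => [|l ls IH] sts ys //=; rewrite IH size_lin_layer_run. Qed.

Lemma lin_run_cat ls xs ys :
  lin_run rd ls (xs ++ ys) =
  lin_run rd ls xs ++ lin_run_from ls (lin_prefix_states ls xs) ys.
Proof.
elim: ls xs ys => [|l ls IH] xs ys //=.
by rewrite /lin_layer_apply lin_layer_run_cat IH.
Qed.

Lemma last_lin_run_cat ls xs y ys :
  last 0 (lin_run rd ls (xs ++ y :: ys)) =
  last 0 (lin_run_from ls (lin_prefix_states ls xs) (y :: ys)).
Proof.
rewrite lin_run_cat last_cat.
case E: (lin_run_from _ _ _) => [|z zs] //.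
by move: (size_lin_run_from ls (lin_prefix_states ls xs) (y :: ys)); rewrite E.
Qed.

Section ChainOfThought.
Variables (ls : seq (lin_layer R d H)) (V : Type) (emb_gen : nat -> V -> 'rV[R]_d)
  (dec : 'rV[R]_d -> V).

Fixpoint cot_generate_from (N : nat) (sts : seq states) (T : nat) ys : seq V :=
  if T is T'.+1 then
    let v := dec (last 0 (lin_run_from ls sts ys)) in
    v :: cot_generate_from N sts T' (rcons ys (rndv rd (emb_gen (N + size ys) v)))
  else [::].

Lemma cot_generate_cat T xs y ys :
  cot_generate rd ls emb_gen dec T (xs ++ y :: ys) =
  cot_generate_from (size xs) (lin_prefix_states ls xs) T (y :: ys).
Proof.
elim: T ys => [|T IH] ys //=.
by rewrite last_lin_run_cat rcons_cat size_cat (IH (rcons ys _)).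
Qed.
End ChainOfThought.

Section RoundedStates.
Variable (P : R -> Prop).
Hypothesis rd_in : forall r, P (rd r).

Definition lin_states_in (st : states) :=
  forall h, (forall i j, P ((st h).1 i j)) /\ (forall i j, P ((st h).2 i j)).

Lemma lin_layer_step_in (l : lin_layer R d H) st x : lin_states_in (lin_layer_step l st x).
Proof. by move=> h; split=> i j; rewrite /lin_layer_step /lin_update /rndv !mxE. Qed.

(* The initial state (0, 0) need not be representable, hence [xs != [::]]. *)
Lemma lin_layer_states_in (l : lin_layer R d H) st xs : xs != [::] -> lin_states_in (lin_layer_states l st xs).
Proof.
elim/last_ind: xs => [|xs x _] // _.
by rewrite /lin_layer_states foldl_rcons; apply: lin_layer_step_in.
Qed.

Lemma lin_prefix_states_in ls xs : xs != [::] ->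
  forall i, (i < size ls)%N -> lin_states_in (nth lin_states0 (lin_prefix_states ls xs) i).
Proof.
elim: ls xs => [|l ls IH] xs xs_neq0 [|i] //= i_lt.
  exact: lin_layer_states_in.
by apply: IH; rewrite // -size_eq0 size_lin_layer_run size_eq0.
Qed.
End RoundedStates.

End LinearAttentionRecurrence.

Section StateEncoding.
Variables (R : realType) (d H p L : nat) (P : precision R p).
(* [(2 ^ p).-1.+1] rather than [2 ^ p], so that [inord] applies. *)
Local Notation k := (2 ^ p).-1.+1.
Local Notation pv := (pvals P).

Definition enc_val (r : R) : 'I_k := inord (index r pv).
Definition dec_val (o : 'I_k) : R := nth 0 pv o.

Lemma enc_valK r : r \in pv -> dec_val (enc_val r) = r.
Proof.
move=> r_in; rewrite /dec_val /enc_val inordK ?nth_index // prednK ?expn_gt0 //.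
by apply: leq_trans (pvals_size P); rewrite index_mem.
Qed.

Definition lin_memory :=
  {ffun 'I_L -> {ffun 'I_H -> 'M['I_k]_d * 'M['I_k]_(1, d)}}.

Lemma card_lin_memory : #|{: lin_memory}| = (2 ^ (L * H * d * (d + 1) * p))%N.
Proof.
rewrite !card_ffun card_prod !card_mx !card_ord prednK ?expn_gt0 //.
by rewrite -expnD -!expnM; congr expn; ring.
Qed.

Definition enc_states (st : 'I_H -> lin_state R d) :=
  [ffun h => (map_mx enc_val (st h).1, map_mx enc_val (st h).2)].

Definition dec_states (c : {ffun 'I_H -> 'M['I_k]_d * 'M['I_k]_(1, d)})
    : 'I_H -> lin_state R d :=
  fun h => (map_mx dec_val (c h).1, map_mx dec_val (c h).2).

Lemma enc_statesK st : lin_states_in (fun r => r \in pv) st -> dec_states (enc_states st) = st.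
Proof.
move=> st_in; apply: funext => h; rewrite /dec_states ffunE /=.
case: (st_in h); case: (st h) => A z /= A_in z_in.
by congr pair; apply/matrixP => i j; rewrite !mxE enc_valK.
Qed.

Definition enc_memory (sts : seq ('I_H -> lin_state R d)) : lin_memory :=
  [ffun i : 'I_L => enc_states (nth (@lin_states0 R d H) sts i)].

Definition dec_memory (c : lin_memory) := [seq dec_states (c i) | i <- enum 'I_L].

Lemma enc_memoryK sts : size sts = L ->
    (forall i, (i < L)%N -> lin_states_in (fun r => r \in pv) (nth (@lin_states0 R d H) sts i)) ->
  dec_memory (enc_memory sts) = sts.
Proof.
move=> size_sts sts_in; rewrite /dec_memory.
transitivity [seq nth (@lin_states0 R d H) sts (val i) | i <- enum 'I_L].
  by apply: eq_map => i; rewrite ffunE enc_statesK //; apply: sts_in.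
by rewrite (map_comp (nth _ sts) val) val_enum_ord -size_sts -/(mkseq _ _) mkseq_nth.
Qed.
End StateEncoding.

Lemma expnn_leq_card n (C : finType) (code : {ffun 'I_n -> 'I_n} -> C)
    (decode : C -> 'I_n -> 'I_n) :
  (forall F x, decode (code F) x = F x) -> (n ^ n <= #|C|)%N.
Proof.
move=> codeK; have code_inj : injective code.
  by move=> F1 F2 eq_code; apply/ffunP => x; rewrite -codeK eq_code codeK.
by move: (leq_card _ code_inj); rewrite card_ffun !card_ord.
Qed.

Lemma expnn_leq_pow2_ln (R : realType) (n N : nat) : (n ^ n <= 2 ^ N)%N ->
  n%:R * (ln (n%:R : R) / ln 2) <= N%:R.
Proof.
case: n => [|n] le_nN; first by rewrite mul0r ler0n.
have ln2_gt0 : (0 : R) < ln 2 by rewrite ln_gt0 // ltr1n.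
have : ln ((n.+1 ^ n.+1)%:R : R) <= ln ((2 ^ N)%:R).
  by rewrite ler_ln ?posrE ?ltr0n ?expn_gt0 ?ler_nat.
rewrite (natrX _ n.+1 n.+1) (natrX _ 2 N) !lnXn ?ltr0n //.
rewrite -[_ *+ n.+1]mulr_natr -[_ *+ N]mulr_natr.
rewrite mulrA ler_pdivrMr //.
by rewrite mulrC (mulrC N%:R).
Qed.

Definition eva_context (R : realType) (rd : R -> R) (n d : nat)
    (emb : nat -> 'I_n -> 'rV[R]_d) (f : 'I_n -> 'I_n) : seq 'rV[R]_d :=
  [seq rndv rd (emb (val i) (f i)) | i <- enum 'I_n].

Definition eva_token (n : nat) (f : 'I_n -> 'I_n) (x : 'I_n) (j : nat) : 'I_n :=
  if (j < n)%N then f (nth x (enum 'I_n) j) else x.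

Lemma size_eva_input (R : realType) (rd : R -> R) n d (emb : nat -> 'I_n -> 'rV[R]_d) f x :
  size (eva_input rd emb f x) = n.+1.
Proof. by rewrite size_cat size_map size_enum_ord addn1. Qed.

Lemma nth_eva_input (R : realType) (rd : R -> R) n d (emb : nat -> 'I_n -> 'rV[R]_d)
    f x j :
  (j <= n)%N -> nth 0 (eva_input rd emb f x) j = rndv rd (emb j (eva_token f x j)).
Proof.
move=> j_le; rewrite nth_cat size_map size_enum_ord /eva_token.
case: ltnP => [j_lt | j_ge].
  have nthE : val (nth x (enum 'I_n) j) = j := nth_enum_ord x j_lt.
  by rewrite (nth_map x) ?size_enum_ord // nthE.
have -> : j = n by apply/eqP; rewrite eqn_leq j_le.
by rewrite subnn.
Qed.

Lemma eva_token_query n (f : 'I_n -> 'I_n) x : eva_token f x n = x.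
Proof. by rewrite /eva_token ltnn. Qed.

Lemma eva_token_arg n (f : 'I_n -> 'I_n) x : eva_token f x x = f x.
Proof. by rewrite /eva_token ltn_ord nth_ord_enum. Qed.

Lemma lin_Eva_memory_bound (R : realType) (n L H d p : nat) (P : precision R p)
    (ls : seq (lin_layer R d H)) (emb : nat -> 'I_n -> 'rV[R]_d)
    (answer : seq ('I_H -> lin_state R d) -> 'I_n -> 'I_n) :
    size ls = L ->
    (forall f x,
       answer (lin_prefix_states (rnd P) ls (eva_context (rnd P) emb f)) x = f x) ->
  (n ^ n <= 2 ^ (L * H * d * (d + 1) * p))%N.
Proof.
move=> size_ls answerP.
case: n emb answer answerP => [|n] emb answer answerP; first by rewrite expn_gt0.
rewrite -(card_lin_memory d H p L).
pose code (F : {ffun 'I_n.+1 -> 'I_n.+1}) :=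
  @enc_memory R d H p L P (lin_prefix_states (rnd P) ls (eva_context (rnd P) emb F)).
apply: (@expnn_leq_card _ _ code (fun c => answer (@dec_memory R d H p L P c))) => F x.
rewrite /code enc_memoryK ?answerP ?size_lin_prefix_states // => i i_lt.
apply: lin_prefix_states_in; first exact: rnd_in.
  by rewrite -size_eq0 size_map size_enum_ord.
by rewrite size_ls.
Qed.

Lemma lin_not_solves_Eva (R : realType) (n L H d p : nat) :
  ((L * H * d * (d + 1) * p)%N%:R : R) < n%:R * (ln (n%:R : R) / ln 2) ->
  forall P : precision R p, ~ lin_solves_Eva P n L H d.
Proof.
move=> lt_mem P [ls [emb [dec [size_ls [_ solves]]]]].
suff /(expnn_leq_pow2_ln R) : (n ^ n <= 2 ^ (L * H * d * (d + 1) * p))%N.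
  by rewrite leNgt lt_mem.
pose answer sts x :=
  dec (last 0 (lin_run_from (rnd P) ls sts [:: rndv (rnd P) (emb n x)])).
apply: (@lin_Eva_memory_bound _ _ _ _ _ _ P ls emb answer size_ls) => f x.
by rewrite /answer -last_lin_run_cat; apply: solves.
Qed.

Lemma lin_cot_not_solves_Eva (R : realType) (n L H d p : nat) :
  ((L * H * d * (d + 1) * p)%N%:R : R) < n%:R * (ln (n%:R : R) / ln 2) ->
  forall P : precision R p, ~ lin_cot_solves_Eva P n L H d.
Proof.
move=> lt_mem P [V [T [ls [emb [emb_gen [dec [ans [size_ls [_ solves]]]]]]]]].
suff /(expnn_leq_pow2_ln R) : (n ^ n <= 2 ^ (L * H * d * (d + 1) * p))%N.
  by rewrite leNgt lt_mem.
pose answer sts x :=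
  ans (cot_generate_from (rnd P) ls emb_gen dec n sts T [:: rndv (rnd P) (emb n x)]).
apply: (@lin_Eva_memory_bound _ _ _ _ _ _ P ls emb answer size_ls) => f x.
by have := solves f x; rewrite /eva_input cot_generate_cat size_map size_enum_ord.
Qed.

Section IntegerRows.
Variables (R : realType) (d : nat).

Definition int_row (z : nat -> int) : 'rV[R]_d := \row_(c < d) (z c)%:~R.

Definition select_mx (g : nat -> nat) (P : pred nat) : 'M[R]_d :=
  \matrix_(r < d, c < d) ((val r == g c) && P c)%:R.

Lemma int_row_select z g P :
  int_row z *m select_mx g P =
  int_row (fun c => if P c && (g c < d)%N then z (g c) else 0).
Proof.
apply/matrixP => i c; rewrite !mxE.
case Pc: (P c) => /=; last first.
  by rewrite big1 // => r _; rewrite !mxE Pc andbF mulr0.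
case: (ltnP (g c) d) => [g_lt | g_ge].
  rewrite (bigD1 (Ordinal g_lt)) //= !mxE eqxx Pc mulr1 big1 ?addr0 // => r r_neq.
  rewrite !mxE Pc andbT; case: eqP => [r_eq | _]; last by rewrite mulr0.
  by case/eqP: r_neq; apply: val_inj.
rewrite big1 // => r _; rewrite !mxE Pc andbT.
by rewrite (ltn_eqF (leq_trans (ltn_ord r) g_ge)) mulr0.
Qed.
End IntegerRows.

Section FixedPoint.
Variables (R : realType) (m : nat).
Hypothesis m_gt0 : (0 < m)%N.
Local Notation p := (2 * m)%N.
Local Notation s := (fx_scale R p).

Lemma fx_scale_double : s = (2 ^ m)%:R.
Proof. by rewrite /fx_scale mul2n doubleK natrX. Qed.

Lemma fx_scale_double_gt0 : 0 < s.
Proof. by rewrite fx_scale_double ltr0n expn_gt0. Qed.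

Lemma fx_range_double :
  fx_lo p = - (2 * 2 ^ (m - 1) * 2 ^ (m - 1))%N%:Z /\
  fx_hi p = (2 * 2 ^ (m - 1) * 2 ^ (m - 1))%N%:Z - 1.
Proof.
rewrite /fx_lo /fx_hi.
have -> : (2 ^ p = 2 * (2 * 2 ^ (m - 1) * 2 ^ (m - 1)))%N.
  by rewrite -expnS -expnD -expnS; congr expn; lia.
rewrite mulKn //; split => //.
by congr (_ - _); congr Posz; lia.
Qed.

Lemma fx_range_int (z : int) : (`|z| < 2 ^ (m - 1))%N ->
  fx_lo p <= z * (2 ^ m)%N%:Z <= fx_hi p.
Proof.
case: fx_range_double => -> ->.
have -> : (2 ^ m = 2 * 2 ^ (m - 1))%N by rewrite -expnS; congr expn; lia.
by move: (2 ^ (m - 1))%N => a z_lt; apply/andP; split; nia.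
Qed.

Lemma fx_clamp_id (z : int) : fx_lo p <= z <= fx_hi p ->
  Num.max (fx_lo p) (Num.min (fx_hi p) z) = z.
Proof. by case/andP => lo_z z_hi; rewrite min_r // max_r. Qed.

Lemma fx_rnd_int (z : int) : (`|z| < 2 ^ (m - 1))%N -> fx_rnd p (z%:~R : R) = z%:~R.
Proof.
move=> z_lt; rewrite /fx_rnd.
have zsE : (z%:~R : R) * s = (z * (2 ^ m)%N%:Z)%:~R by rewrite fx_scale_double intrM.
have -> : Num.floor ((z%:~R : R) * s + 2%:R^-1) = z * (2 ^ m)%N%:Z.
  apply: floor_def; rewrite zsE lerDl invr_ge0 ler0n /= intrD ltrD2l.
  by rewrite invf_lt1 ?ltr1n ?ltr0n.
by rewrite fx_clamp_id ?fx_range_int // -zsE mulfK // gt_eqF ?fx_scale_double_gt0.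
Qed.

Lemma fx_rnd_int_row d (z : nat -> int) :
    (forall c, (c < d)%N -> (`|z c| < 2 ^ (m - 1))%N) ->
  rndv (fx_rnd p) (@int_row R d z) = @int_row R d z.
Proof. by move=> z_small; apply/matrixP => i c; rewrite !mxE fx_rnd_int ?z_small. Qed.

Lemma is_fx_int (z : int) : (`|z| < 2 ^ (m - 1))%N -> is_fx p (z%:~R : R).
Proof.
move=> z_lt; exists (z * (2 ^ m)%N%:Z); split; first exact: fx_range_int.
have sE : ((2 ^ m)%N%:Z%:~R : R) = s by rewrite fx_scale_double.
by rewrite intrM sE mulfK // gt_eqF ?fx_scale_double_gt0.
Qed.

Lemma fx_rnd_small (r : R) : 0 <= r -> r * s < 2%:R^-1 -> fx_rnd p r = 0.
Proof.
move=> r_ge0 rs_lt; rewrite /fx_rnd.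
have -> : Num.floor (r * s + 2%:R^-1) = 0.
  apply: floor_def; rewrite /= add0r; apply/andP; split; last by lra.
  by rewrite addr_ge0 ?invr_ge0 ?ler0n // mulr_ge0 // ltW ?fx_scale_double_gt0.
rewrite fx_clamp_id ?mul0r //.
by have := @fx_range_int 0 (expn_gt0 _ _); rewrite mul0r.
Qed.

Lemma pow2_le_expR (C : nat) : (2 ^ C)%:R <= expR (C%:R : R).
Proof.
rewrite -[C%:R]mulr1 expRM_natl natrX.
by rewrite lerXn2r ?nnegrE ?ler0n ?expR_ge0 // (le_trans _ (expR_ge1Dx 1)).
Qed.

Lemma fx_rnd_expR_small (t : R) : t <= - (m + 2)%N%:R -> fx_rnd p (expR t) = 0.
Proof.
move=> t_le; apply: fx_rnd_small; first exact: expR_ge0.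
have exp_le : expR t <= ((2 ^ (m + 2))%:R)^-1.
  rewrite (le_trans (y := expR (- (m + 2)%N%:R))) ?ler_expR // expRN.
  by rewrite lef_pV2 ?posrE ?expR_gt0 ?ltr0n ?expn_gt0 ?pow2_le_expR.
apply: (le_lt_trans (y := ((2 ^ (m + 2))%:R)^-1 * s)).
  by rewrite ler_pM2r ?fx_scale_double_gt0.
rewrite fx_scale_double expnD natrM invfM mulrAC mulVf ?pnatr_eq0 ?expn_eq0 // mul1r.
by rewrite ltf_pV2 ?posrE ?ltr0n // ltr_nat.
Qed.
End FixedPoint.

Lemma last_map_iota (T : Type) (x0 : T) (F : nat -> T) N :
  last x0 [seq F i | i <- iota 0 N.+1] = F N.
Proof. by rewrite -[N.+1]addn1 iotaD map_cat last_cat. Qed.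

Lemma full_out_onehot (R : realType) (rd : R -> R) d (hd : full_head R d) xs i
    (j0 : 'I_i.+1) :
    (forall j : 'I_i.+1,
       rd (expR (rd (\sum_(c < d) (rndv rd (nth 0 xs i *m fQ hd)) 0 c *
                                  (rndv rd (nth 0 xs j *m fK hd)) 0 c)))
       = (j == j0)%:R) ->
  full_out rd hd xs i = rndv rd ((rd 1)^-1 *: rndv rd (rndv rd (nth 0 xs j0 *m fV hd))).
Proof.
move=> weightE; rewrite /full_out /=.
under eq_bigr => j _ do rewrite weightE.
under [in X in rndv rd (_ *: X)]eq_bigr => j _ do rewrite weightE.
have sum_onehot (F : 'I_i.+1 -> 'rV[R]_d) : \sum_j (j == j0)%:R *: F j = F j0.
  by rewrite (bigD1 j0) //= eqxx scale1r big1 ?addr0 // => j /negbTE ->; rewrite scale0r.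
have sum_onehot1 : \sum_(j < i.+1) ((j == j0)%:R : R) = 1.
  by rewrite (bigD1 j0) //= eqxx big1 ?addr0 // => j /negbTE ->.
by rewrite sum_onehot sum_onehot1.
Qed.

Section LookupLayer.
Variable R : realType.
Local Notation sel7 := (@select_mx R 7).

Definition query_mx : 'M[R]_7 := sel7 (addn^~ 3) (fun c => (c < 3)%N).
Definition key_mx : 'M[R]_7 := sel7 id (fun c => (c < 3)%N).
Definition value_mx : 'M[R]_7 := sel7 (fun _ => 6%N) (fun c => c == 0%N).

Definition lookup_layer : full_layer R 7 1 :=
  FullLayer (fun _ => FullHead query_mx key_mx value_mx) (fun _ ys => ys ord0).

Lemma lookup_layer_wf m : (1 < 2 ^ (m - 1))%N -> full_layer_wf (is_fx (2 * m)) lookup_layer.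
Proof.
move=> one_lt; have m_gt0 : (0 < m)%N by case: m one_lt.
have is_fx_bool (b : bool) : is_fx (2 * m) (b%:R : R).
  by apply: (@is_fx_int R m m_gt0 b); case: b; rewrite ?one_lt ?expn_gt0.
by move=> h i j; rewrite /= !mxE; split; [|split]; apply: is_fx_bool.
Qed.
End LookupLayer.

Section EvaLookup.
Variables (R : realType) (n m : nat).
Hypotheses (n_gt0 : (0 < n)%N) (m_gt0 : (0 < m)%N)
  (n_small : (2 * (m + 2) * n * n < 2 ^ (m - 1))%N).
Local Notation p := (2 * m)%N.
Local Notation rd := (@fx_rnd R p).
Local Notation C := (m + 2)%N.
Local Notation row7 := (@int_row R 7).
Local Notation sel7 := (@select_mx R 7).

Lemma one_lt_pow2m : (1 < 2 ^ (m - 1))%N.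
Proof. by apply: leq_ltn_trans n_small; nia. Qed.

Lemma fx_rnd1 : rd 1 = 1.
Proof. exact: (@fx_rnd_int R m m_gt0 1 one_lt_pow2m). Qed.

(* Position j < n carrying token t is encoded as (1, j, j^2, 0, 0, 0, t) and
   the query position carrying x as (1, 0, 1, -C x^2, 2 C x, -C, 0), so that
   the query part (coordinates 3..5) of the last position against the key part
   (coordinates 0..2) of position j gives the score -C (x - j)^2. *)
Definition eva_code (pos tok c : nat) : int :=
  if (pos < n)%N then nth 0 [:: 1; pos%:Z; (pos * pos)%:Z; 0; 0; 0; tok%:Z] c
  else nth 0 [:: 1; 0; 1; - (C * tok * tok)%:Z; (2 * C * tok)%:Z; - C%:Z; 0] c.

Lemma eva_code_small pos tok c : (tok < n)%N -> (`|eva_code pos tok c| < 2 ^ (m - 1))%N.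
Proof.
move=> tok_lt; apply: leq_ltn_trans n_small.
rewrite /eva_code; case: ifP => pos_lt.
  by do 7?[case: c => [|c]] => /=; rewrite ?nth_nil /=; nia.
have tok_le : (tok <= n * n)%N by nia.
have C_le : (C * (n * n) <= 2 * C * n * n)%N by rewrite -!mulnA leq_pmull.
do 7?[case: c => [|c]] => /=; rewrite ?nth_nil ?abszN /=; try nia.
apply: leq_trans C_le; rewrite -mulnA leq_mul2l; apply/orP; right.
by apply: leq_mul; apply: ltnW.
Qed.

Definition eva_emb (pos : nat) (tok : 'I_n) : 'rV[R]_7 := row7 (eva_code pos tok).

Definition lookup_dec (y : 'rV[R]_7) : 'I_n :=
  insubd (Ordinal n_gt0) `|Num.floor (y ord0 ord0)|%N.

Lemma eva_emb_select pos (tok : 'I_n) g P :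
  rndv rd (eva_emb pos tok *m sel7 g P) =
  row7 (fun c => if P c && (g c < 7)%N then eva_code pos tok (g c) else 0).
Proof.
rewrite int_row_select fx_rnd_int_row // => c _.
by case: ifP => _; rewrite ?eva_code_small ?expn_gt0.
Qed.

Lemma token_small (t : 'I_n) : (t < 2 ^ (m - 1))%N.
Proof. by apply: leq_ltn_trans n_small; have := ltn_ord t; nia. Qed.

Lemma fx_rnd_eva_emb pos (tok : 'I_n) : rndv rd (eva_emb pos tok) = eva_emb pos tok.
Proof. by rewrite fx_rnd_int_row // => c _; apply: eva_code_small. Qed.

Definition answer_row (t : 'I_n) := row7 (fun c => if c == 0%N then t%:Z else 0).

Lemma fx_rnd_answer_row t : rndv rd (answer_row t) = answer_row t.
Proof.
by rewrite fx_rnd_int_row // => c _; case: ifP => _ /=; rewrite ?token_small ?expn_gt0.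
Qed.

Lemma eva_emb_value pos (tok : 'I_n) :
  (pos < n)%N -> rndv rd (eva_emb pos tok *m (value_mx R)) = answer_row tok.
Proof.
move=> pos_lt; rewrite eva_emb_select /eva_code pos_lt /answer_row.
by congr int_row; apply: funext => c; case: (c == 0%N).
Qed.

Section Instance.
Variables (f : 'I_n -> 'I_n) (x : 'I_n).
Local Notation xs := (eva_input rd eva_emb f x).

Definition lookup_score (j : nat) : int :=
  if (j < n)%N then - (C%:Z * (x%:Z - j%:Z) ^+ 2) else - (C%:Z * (x%:Z * x%:Z + 1)).

Lemma lookup_scoreE (j : nat) (tok : 'I_n) :
  \sum_(c < 7) (rndv rd (eva_emb n x *m (query_mx R))) 0 c *
               (rndv rd (eva_emb j tok *m (key_mx R))) 0 c = (lookup_score j)%:~R.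
Proof.
rewrite !eva_emb_select !big_ord_recr big_ord0 /= !mxE /=.
rewrite !mul0r !addr0 add0r -!intrM -!intrD; congr (_%:~R).
by rewrite /eva_code /lookup_score ltnn /=; case: ifP => _ /=; rewrite !PoszM; ring.
Qed.

Lemma lookup_score_small j : (j <= n)%N -> (`|lookup_score j| < 2 ^ (m - 1))%N.
Proof.
move=> j_le; apply: leq_ltn_trans n_small.
have x_lt := ltn_ord x.
have C_le : (C * (n * n) <= 2 * C * n * n)%N by rewrite -!mulnA leq_pmull.
apply: leq_trans C_le.
rewrite /lookup_score; case: ifP => j_lt; rewrite abszN abszM /= leq_mul2l; apply/orP; right.
  have dist_le : (`|x%:Z - j%:Z| <= n)%N by lia.
  by rewrite abszX expnS expn1 leq_mul.
nia.
Qed.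

Lemma lookup_score_le (j : nat) : j != x -> lookup_score j <= - C%:Z.
Proof.
move=> j_neq; rewrite /lookup_score.
case: ifP => _; rewrite lerN2 -[X in X <= _]mulr1 ler_wpM2l //; last by lia.
have : x%:Z != j%:Z by rewrite eqz_nat eq_sym.
by rewrite -subr_eq0; move: (x%:Z - j%:Z) => t t_neq0; rewrite expr2; nia.
Qed.

Lemma lookup_weight j : (j <= n)%N ->
  rd (expR (rd (lookup_score j)%:~R)) = (j == x)%:R.
Proof.
move=> j_le; rewrite fx_rnd_int ?lookup_score_small //.
case: eqP => [-> | /eqP j_neq].
  by rewrite /lookup_score ltn_ord subrr expr0n mulr0 oppr0 expR0 fx_rnd1.
apply: fx_rnd_expR_small => //.
have -> : - (C%:R : R) = (- C%:Z)%:~R by rewrite intrN.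
by rewrite ler_int lookup_score_le.
Qed.

Lemma lookup_head_out :
  full_out rd (FullHead (query_mx R) (key_mx R) (value_mx R)) xs n = answer_row (f x).
Proof.
have x_le : (x <= n)%N := ltnW (ltn_ord x).
rewrite (full_out_onehot (j0 := widen_ord (leqnSn n) x)) => [|j] /=.
  rewrite fx_rnd1 invr1 scale1r nth_eva_input // eva_token_arg fx_rnd_eva_emb.
  by rewrite eva_emb_value ?fx_rnd_answer_row.
have j_le : (j <= n)%N := ltn_ord j.
by rewrite !nth_eva_input // !fx_rnd_eva_emb eva_token_query lookup_scoreE lookup_weight.
Qed.
End Instance.

Lemma lookup_layer_solves f x :
  lookup_dec (last 0 (full_layer_apply rd (lookup_layer R) (eva_input rd eva_emb f x))) = f x.
Proof.
rewrite /full_layer_apply size_eva_input last_map_iota /= lookup_head_out.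
by rewrite fx_rnd_answer_row /lookup_dec mxE /= intrKfloor /= valKd.
Qed.
End EvaLookup.

Lemma full1_solves_Eva_polylog : exists c k : nat, forall (R : realType) (n : nat),
  (0 < n)%N -> exists H d p : nat,
    (H * d * p <= c * (trunc_log 2 n).+1 ^ k)%N /\ full1_solves_Eva R n H d p.
Proof.
exists 168%N, 1%N => R n n_gt0.
set B := (trunc_log 2 n).+1.
have n_lt : (n < 2 ^ B)%N by apply: trunc_log_ltn.
have B_lt : (B < 2 ^ B)%N by apply: ltn_expl.
set m := (4 * B + 8)%N.
have m_gt0 : (0 < m)%N by rewrite /m addnS.
have n_small : (2 * (m + 2) * n * n < 2 ^ (m - 1))%N.
  have -> : (2 ^ (m - 1) = 128 * (2 ^ B * 2 ^ B * 2 ^ B * 2 ^ B))%N.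
    by rewrite -!expnD -(expnD 2 7); congr expn; rewrite /m; lia.
  move: (2 ^ B)%N n_lt B_lt => a n_lt B_lt.
  have m_le : (2 * (m + 2) <= 28 * a)%N by rewrite /m; lia.
  have nn_lt : (n * n < a * a)%N by apply: ltn_mul.
  apply: (@leq_ltn_trans (28 * a * (n * n))); first by rewrite -mulnA leq_mul.
  by apply: (@leq_trans (28 * a * (a * a))); [rewrite ltn_pmul2l //; lia | nia].
(* H d p = 14 m = 56 B + 112 <= 168 B *)
exists 1%N, 7%N, (2 * m)%N; split; first by rewrite expn1 /m; lia.
exists (lookup_layer R), (eva_emb R m), (lookup_dec n_gt0); split.
  exact: lookup_layer_wf (one_lt_pow2m n_gt0 m_gt0 n_small).
exact: lookup_layer_solves.
Qed.

Theorem theoremA3 :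
  (* lower bound for linear attention *)
  (forall (R : realType) (n L H d p : nat),
     ((L * H * d * (d + 1) * p)%N%:R : R) < n%:R * (ln (n%:R : R) / ln 2) ->
     forall P : precision R p, ~ lin_solves_Eva P n L H d)
  /\
  (* upper bound: one layer of full attention with H*d*p = O(polylog n) *)
  (exists c k : nat, forall (R : realType) (n : nat), (0 < n)%N ->
     exists H d p : nat,
       (H * d * p <= c * (trunc_log 2 n).+1 ^ k)%N /\
       full1_solves_Eva R n H d p)
  /\
  (* lower bound for linear attention with chain of thought *)
  (forall (R : realType) (n L H d p : nat),
     ((L * H * d * (d + 1) * p)%N%:R : R) < n%:R * (ln (n%:R : R) / ln 2) ->
     forall P : precision R p, ~ lin_cot_solves_Eva P n L H d).
Proof.
split; first exact: lin_not_solves_Eva.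
split; first exact: full1_solves_Eva_polylog.
exact: lin_cot_not_solves_Eva.
Qed.
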